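(* There is a geodesic coarse median space $(X,d,\mu)$ of rank $2$ such that for every $C\geqslant0$ there exist $a,b\in X$ with the property that no geodesic connecting $a$ and $b$ lies within Hausdorff distance $C$ of the interval $[a,b]$.
   Context: Write $x\sim_s y$ if $d(x,y)\leqslant s$. A coarse median space is a triple $(X,d,\mu)$ with $(X,d)$ a metric space and $\mu\colon X^3\to X$ satisfying: (M1) $\mu(a,a,b)=a$; (M2) $\mu(a_1,a_2,a_3)$ is invariant under permutations of its arguments; (C1) there is an affine $\rho(t)=Kt+H_0$ with $d(\mu(a,b,c),\mu(a',b',c'))\leqslant\rho(d(a,a')+d(b,b')+d(c,c'))$ for all points; (C2) there is $H\colon\mathbb N\to[0,\infty)$ such that for every finite $A\subseteq X$ with $1\leqslant|A|\leqslant p$ there are a finite median algebra $(\Pi,\mu_\Pi)$ and maps $\pi\colon A\to\Pi$, $\lambda\colon\Pi\to X$ with $\lambda\mu_\Pi(x,y,z)\sim_{H(p)}\mu(\lambda x,\lambda y,\lambda z)$ for all $x,y,z\in\Pi$ and $\lambda\pi a\sim_{H(p)}a$ for all $a\in A$. (A median algebra is a set with a ternary operation $m$ satisfying $m(a,a,b)=a$, full symmetry, and $m(m(a,b,c),b,d)=m(a,b,m(c,b,d))$.) The rank of a median algebra is the supremum of $k$ such that it contains a subalgebra isomorphic to $I^k=(\mathbb Z_2)^k$ with coordinatewise majority vote as median. The coarse median space has rank at most $n$ if there exist $\rho,H$ as in (C1),(C2) for which $\Pi$ in (C2) can always be chosen of rank at most $n$; its rank is the least such $n$. The interval is $[a,b]=\{\mu(a,y,b):y\in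 X\}$. *)

From Stdlib Require Import Reals List.
From mathcomp Require Import all_boot.

Set Implicit Arguments.
Unset Strict Implicit.
Unset Printing Implicit Defensive.

Local Open Scope R_scope.

Definition is_metric (X : Type) (d : X -> X -> R) : Prop :=
  (forall x y, 0 <= d x y) /\
  (forall x y, d x y = 0 <-> x = y) /\
  (forall x y, d x y = d y x) /\
  (forall x y z, d x z <= d x y + d y z).

Definition geodesic_between (X : Type) (d : X -> X -> R) (a b : X)
    (L : R) (g : R -> X) : Prop :=
  0 <= L /\ g 0 = a /\ g L = b /\
  (forall s t, 0 <= s <= L -> 0 <= t <= L -> d (g s) (g t) = Rabs (s - t)).

Definition geodesic_space (X : Type) (d : X -> X -> R) : Prop :=
  forall a b, exists (L : R) (g : R -> X), geodesic_between d a b L g.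

Definition geodesic_image (X : Type) (L : R) (g : R -> X) : X -> Prop :=
  fun z => exists t, 0 <= t <= L /\ z = g t.

Definition hausdorff_le (X : Type) (d : X -> X -> R) (A B : X -> Prop) (C : R)
    : Prop :=
  (forall x, A x -> forall eps, 0 < eps -> exists y, B y /\ d x y <= C + eps) /\
  (forall y, B y -> forall eps, 0 < eps -> exists x, A x /\ d y x <= C + eps).

Definition is_median_algebra (P : Type) (m : P -> P -> P -> P) : Prop :=
  (forall a b, m a a b = a) /\
  (forall a b c, m a b c = m b a c /\ m a b c = m a c b) /\
  (forall a b c e, m (m a b c) b e = m a b (m c b e)).

Definition cube (k : nat) : finType := {ffun 'I_k -> bool}.

Definition majority (x y z : bool) : bool := [|| x && y, y && z | x && z].

Definition cube_median (k : nat) (x y z : cube k) : cube k :=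
  [ffun i => majority (x i) (y i) (z i)].

Definition median_hom (P Q : Type) (mP : P -> P -> P -> P)
    (mQ : Q -> Q -> Q -> Q) (f : P -> Q) : Prop :=
  forall x y z, f (mP x y z) = mQ (f x) (f y) (f z).

(* rank at most n: every subalgebra isomorphic to I^k (= image of an
   injective median homomorphism I^k -> P) has k <= n *)
Definition median_rank_le (P : Type) (m : P -> P -> P -> P) (n : nat) : Prop :=
  forall (k : nat) (f : cube k -> P),
    injective f -> median_hom (@cube_median k) m f -> (k <= n)%N.

Definition median_axioms (X : Type) (mu : X -> X -> X -> X) : Prop :=
  (forall a b, mu a a b = a) /\
  (forall a b c, mu a b c = mu b a c /\ mu a b c = mu a c b).

(* (C1) with rho(t) = K t + H0 *)
Definition cm_C1 (X : Type) (d : X -> X -> R) (mu : X -> X -> X -> X)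
    (K H0 : R) : Prop :=
  forall a b c a' b' c',
    d (mu a b c) (mu a' b' c') <= K * (d a a' + d b b' + d c c') + H0.

Definition cm_C2 (X : Type) (d : X -> X -> R) (mu : X -> X -> X -> X)
    (H : nat -> R) (ok : forall P : finType, (P -> P -> P -> P) -> Prop) : Prop :=
  (forall p, 0 <= H p) /\
  forall (p : nat) (A : list X), NoDup A ->
    (1 <= length A)%nat -> (length A <= p)%nat ->
    exists (Pi : finType) (mPi : Pi -> Pi -> Pi -> Pi) (pi : X -> Pi) (lam : Pi -> X),
      is_median_algebra mPi /\ ok Pi mPi /\
      (forall x y z, d (lam (mPi x y z)) (mu (lam x) (lam y) (lam z)) <= H p) /\
      (forall a, In a A -> d (lam (pi a)) a <= H p).

Definition coarse_median_space (X : Type) (d : X -> X -> R)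
    (mu : X -> X -> X -> X) : Prop :=
  is_metric d /\ median_axioms mu /\
  exists (K H0 : R) (H : nat -> R),
    cm_C1 d mu K H0 /\ cm_C2 d mu H (fun _ _ => True).

Definition coarse_median_rank_le (X : Type) (d : X -> X -> R)
    (mu : X -> X -> X -> X) (n : nat) : Prop :=
  coarse_median_space d mu /\
  exists (K H0 : R) (H : nat -> R),
    cm_C1 d mu K H0 /\ cm_C2 d mu H (fun P m => median_rank_le m n).

Definition coarse_median_rank (X : Type) (d : X -> X -> R)
    (mu : X -> X -> X -> X) (n : nat) : Prop :=
  coarse_median_rank_le d mu n /\
  forall m, coarse_median_rank_le d mu m -> (n <= m)%N.

Definition cm_interval (X : Type) (mu : X -> X -> X -> X) (a b : X) : X -> Prop :=
  fun z => exists y, z = mu a y b.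

From Stdlib Require Import Reals Lra.
From mathcomp Require Import all_boot.
From mathcomp Require Import Rstruct.

Set Implicit Arguments.
Unset Strict Implicit.
Unset Printing Implicit Defensive.

Local Open Scope R_scope.

(* The example is the plane with the l1 metric and the coordinatewise median.
   A finite set lies in the grid spanned by its coordinates, a finite median
   subalgebra embedded in a product of two lines, so (C2) holds exactly with
   rank at most 2; conversely, approximating the corners of an arbitrarily large
   square forces a 2-cube into the approximating median algebras, so the rank is
   exactly 2. The interval between (0,0) and (N,N) is the whole square, but an
   l1-geodesic between them has length 2N and can come within r of (N,0) only at
   times within r of N, and likewise for (0,N); as these corners are 2N apart,
   it cannot pass close to both. *)

Ltac real_cases :=
  unfold Rabs, Rmax, Rmin in *;
  repeat match goal with
  | |- context [Rle_dec ?a ?b] => destruct (Rle_dec a b)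
  | H : context [Rle_dec ?a ?b] |- _ => destruct (Rle_dec a b)
  | |- context [Rcase_abs ?a] => destruct (Rcase_abs a)
  | H : context [Rcase_abs ?a] |- _ => destruct (Rcase_abs a)
  end; simpl in *; lra.

Section Metric.
Variables (X : Type) (d : X -> X -> R).
Hypothesis d_metric : is_metric d.

Lemma metric_ge0 x y : 0 <= d x y. Proof. by case: d_metric. Qed.
Lemma metric_xx x : d x x = 0. Proof. by case: d_metric => _ [/(_ x x) [_ ->]]. Qed.
Lemma metric_sym x y : d x y = d y x. Proof. by case: d_metric => _ [_ []]. Qed.
Lemma metric_triangle x y z : d x z <= d x y + d y z.
Proof. by case: d_metric => _ [_ [_]]. Qed.

Lemma metric_gt0_neq x y : 0 < d x y -> x <> y.
Proof. by move=> + exy; rewrite exy metric_xx; lra. Qed.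

Section Geodesic.
Variables (a b : X) (L : R) (g : R -> X).
Hypothesis g_geo : geodesic_between d a b L g.

Lemma geodesic_dist_start t : 0 <= t <= L -> d a (g t) = t.
Proof.
case: g_geo => L0 [<- [_ gi]] ht; rewrite gi; [|lra|done].
by rewrite Rminus_0_l Rabs_Ropp Rabs_pos_eq; lra.
Qed.

Lemma geodesic_dist_end t : 0 <= t <= L -> d (g t) b = L - t.
Proof.
case: g_geo => L0 [_ [<- gi]] ht; rewrite gi; [|done|lra].
by rewrite Rabs_minus_sym Rabs_pos_eq; lra.
Qed.

Lemma geodesic_length : L = d a b.
Proof.
have L0 : 0 <= L by case: g_geo.
have := @geodesic_dist_end 0; case: g_geo => _ [-> _] ->; lra.
Qed.

Lemma geodesic_time_near p t r :
  d a p + d p b = d a b -> 0 <= t <= L -> d p (g t) <= r -> Rabs (t - d a p) <= r.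
Proof.
move=> hp ht hr; rewrite -geodesic_length in hp.
have := metric_triangle a (g t) p; have := metric_triangle p (g t) b.
rewrite (metric_sym (g t) p) geodesic_dist_start // geodesic_dist_end //.
real_cases.
Qed.

Lemma geodesic_near_two_points p q r t1 t2 :
  d a p + d p b = d a b -> d a q + d q b = d a b ->
  0 <= t1 <= L -> 0 <= t2 <= L -> d p (g t1) <= r -> d q (g t2) <= r ->
  d p q <= 4 * r + Rabs (d a p - d a q).
Proof.
move=> hp hq ht1 ht2 hr1 hr2.
have e1 := geodesic_time_near hp ht1 hr1.
have e2 := geodesic_time_near hq ht2 hr2.
have := metric_triangle p (g t1) q; have := metric_triangle (g t1) (g t2) q.
have -> : d (g t1) (g t2) = Rabs (t1 - t2) by case: g_geo => _ [_ [_ ->]].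
rewrite (metric_sym (g t2) q); move: e1 e2; real_cases.
Qed.

End Geodesic.
End Metric.

(* [w] and [z] are opposite corners, and so are [x] and [y]. *)
Definition is_square {P : Type} (m : P -> P -> P -> P) (w x y z : P) : Prop :=
  [/\ m w x y = w, m x w z = x, m y w z = y & m z x y = z].

Definition pairwise4 {T : Type} (rel : T -> T -> Prop) (w x y z : T) : Prop :=
  [/\ rel w x, rel w y, rel w z & [/\ rel x y, rel x z & rel y z]].

Lemma pairwise4_impl (T : Type) (r1 r2 : T -> T -> Prop) w x y z :
  (forall u v, r1 u v -> r2 u v) -> pairwise4 r1 w x y z -> pairwise4 r2 w x y z.
Proof. by move=> r12 [? ? ? [? ? ?]]; do ![split | apply: r12 => //]. Qed.

Lemma pairwise4_NoDup (T : Type) (w x y z : T) :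
  pairwise4 (fun u v => u <> v) w x y z -> List.NoDup [:: w; x; y; z].
Proof. by case=> ? ? ? [? ? ?]; repeat constructor => /=; intuition congruence. Qed.

Section MedianAlgebra.
Variables (P : Type) (m : P -> P -> P -> P).
Hypothesis m_median : is_median_algebra m.

Lemma median_algebra_axioms : median_axioms m. Proof. by case: m_median => ? []. Qed.

Lemma median_idl a b : m a a b = a. Proof. by case: m_median. Qed.
Lemma medianC12 a b c : m a b c = m b a c.
Proof. by case: m_median => _ [/(_ a b c) []]. Qed.
Lemma medianC23 a b c : m a b c = m a c b.
Proof. by case: m_median => _ [/(_ a b c) []]. Qed.
Lemma medianA a b c e : m (m a b c) b e = m a b (m c b e).
Proof. by case: m_median => _ [_ ->]. Qed.
Lemma median_idm a b : m a b a = a. Proof. by rewrite medianC23 median_idl. Qed.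
Lemma median_idr a b : m b a a = a. Proof. by rewrite medianC12 median_idm. Qed.

Lemma median_perm a b c e : m a b c = e ->
  [/\ m a c b = e, m b a c = e, m b c a = e, m c a b = e & m c b a = e].
Proof.
move=> <-; split.
- by rewrite medianC23.
- by rewrite medianC12.
- by rewrite medianC23 medianC12.
- by rewrite medianC12 medianC23.
- by rewrite medianC12 medianC23 medianC12.
Qed.

Lemma median_gate_mem a b c : m a (m a b c) c = m a b c.
Proof. by rewrite medianC12 (medianC12 a b c) medianA median_idm. Qed.

(* [x] and [y] are the gates of [b] and [e] in the interval [a, c]; the gates
   of [a] and [c] in [x, y] complete them to a square. *)
Lemma median_square a b c e :
  let x := m a b c in let y := m a e c in
  is_square m (m a x y) x y (m c x y).
Proof.
move=> x y; set w := m a x y; set z := m c x y.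
have gx : m a x c = x by apply: median_gate_mem.
have gy : m a y c = y by apply: median_gate_mem.
have zsq : m z x y = z by rewrite /z medianA median_idm.
have zC : m x z y = z by rewrite medianC12.
split => //.
- by rewrite /w medianA median_idm.
- rewrite (medianC12 x w z) /w medianA (medianC12 y x z) (medianC23 x y z) zC.
  by rewrite /z -medianA gx median_idl.
- rewrite (medianC12 y w z) /w (medianC23 a x y) medianA (medianC23 x y z) zC.
  by rewrite /z (medianC23 c x y) -medianA gy median_idl.
Qed.

Definition square_map (w x y z : P) (v : cube 2) : P :=
  if v ord0 then (if v ord_max then z else x) else (if v ord_max then y else w).

Lemma square_map_hom w x y z :
  is_square m w x y z -> median_hom (@cube_median 2) m (square_map w x y z).
Proof.
case=> sw sx sy sz.
have [? ? ? ? ?] := median_perm sw; have [? ? ? ? ?] := median_perm sx.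
have [? ? ? ? ?] := median_perm sy; have [? ? ? ? ?] := median_perm sz.
move=> u v t; rewrite /square_map !ffunE /majority.
case: (u ord0); case: (u ord_max); case: (v ord0); case: (v ord_max);
  case: (t ord0); case: (t ord_max) => /=; symmetry;
  first [apply: median_idl | apply: median_idm | apply: median_idr | assumption].
Qed.

Lemma cube2_ext (u v : cube 2) : u ord0 = v ord0 -> u ord_max = v ord_max -> u = v.
Proof.
move=> h0 h1; apply/ffunP => -[[|[|i]] Hi] //.
- by rewrite (_ : Ordinal Hi = ord0) //; apply: val_inj.
- by rewrite (_ : Ordinal Hi = ord_max) //; apply: val_inj.
Qed.

Lemma square_map_inj w x y z :
  pairwise4 (fun u v => u <> v) w x y z -> injective (square_map w x y z).
Proof.
case=> nwx nwy nwz [nxy nxz nyz] u v; rewrite /square_map.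
case E0: (u ord0); case E1: (u ord_max); case F0: (v ord0); case F1: (v ord_max) => e;
  try (apply: cube2_ext; congruence); exfalso; congruence.
Qed.

Lemma median_rank_ge2_of_square n w x y z :
  median_rank_le m n -> is_square m w x y z ->
  pairwise4 (fun u v => u <> v) w x y z -> (2 <= n)%N.
Proof.
move=> rk sq neq; apply: (rk 2%N (square_map w x y z)).
- exact: square_map_inj.
- exact: square_map_hom.
Qed.

End MedianAlgebra.

Section MedianHom.
Variables (P Q : Type) (mP : P -> P -> P -> P) (mQ : Q -> Q -> Q -> Q) (f : P -> Q).
Hypothesis f_hom : median_hom mP mQ f.

Lemma is_square_hom w x y z :
  is_square mP w x y z -> is_square mQ (f w) (f x) (f y) (f z).
Proof. by case=> sw sx sy sz; split; rewrite -f_hom ?sw ?sx ?sy ?sz. Qed.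

Hypothesis f_inj : injective f.

Lemma median_algebra_inj : is_median_algebra mQ -> is_median_algebra mP.
Proof.
move=> mQ_median; split; [|split].
- by move=> a b; apply: f_inj; rewrite f_hom median_idl.
- move=> a b c; split; apply: f_inj; rewrite !f_hom.
  + exact: medianC12.
  + exact: medianC23.
- by move=> a b c e; apply: f_inj; rewrite !f_hom medianA.
Qed.

Lemma median_rank_le_inj n : median_rank_le mQ n -> median_rank_le mP n.
Proof.
move=> rk k g g_inj g_hom; apply: (rk k (f \o g)).
- by move=> u v /f_inj /g_inj.
- by move=> u v t; rewrite /= g_hom f_hom.
Qed.

End MedianHom.

Definition cube0 (k : nat) : cube k := [ffun _ => false].
Definition cube_unit {k : nat} (i : 'I_k) : cube k := [ffun l => l == i].
Definition cube_pair {k : nat} (i j : 'I_k) : cube k := [ffun l => (l == i) || (l == j)].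

Lemma cube_square k (i j : 'I_k) :
  i != j -> is_square (@cube_median k) (cube0 k) (cube_unit i) (cube_unit j) (cube_pair i j).
Proof.
move=> ij; split; apply/ffunP => l; rewrite !ffunE /majority;
  case: (eqVneq l i) => [->|_]; rewrite ?(negbTE ij) ?eqxx //=; by case: (l == j).
Qed.

Lemma cm_C2_weaken (X : Type) (d : X -> X -> R) (mu : X -> X -> X -> X) (H : nat -> R)
    (ok ok' : forall P : finType, (P -> P -> P -> P) -> Prop) :
  (forall P m, ok P m -> ok' P m) -> cm_C2 d mu H ok -> cm_C2 d mu H ok'.
Proof.
move=> okW [H_ge0 C2]; split=> // p A nd A_ge1 A_le.
have [Pi [m [pi [lam [m_median [/okW m_ok approx]]]]]] := C2 p A nd A_ge1 A_le.
by exists Pi, m, pi, lam.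
Qed.

Section RankLowerBound.
Variables (X : Type) (d : X -> X -> R) (mu : X -> X -> X -> X) (K H0 : R).
Hypotheses (d_metric : is_metric d) (mu_C1 : cm_C1 d mu K H0).

Lemma approx_median (P : Type) (m : P -> P -> P -> P) (lam : P -> X) h u v t p q r eu ev et :
  d (lam (m u v t)) (mu (lam u) (lam v) (lam t)) <= h ->
  d (lam u) p <= eu -> d (lam v) q <= ev -> d (lam t) r <= et ->
  d (lam (m u v t)) (mu p q r) <= h + Rabs K * (eu + ev + et) + Rabs H0.
Proof.
move=> hm hu hv ht.
have := mu_C1 (lam u) (lam v) (lam t) p q r.
have := metric_triangle d_metric (lam (m u v t)) (mu (lam u) (lam v) (lam t)) (mu p q r).
have : K * (d (lam u) p + d (lam v) q + d (lam t) r) <= Rabs K * (eu + ev + et).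
  apply: Rle_trans (Rle_abs _) _; rewrite Rabs_mult.
  apply: Rmult_le_compat_l; first exact: Rabs_pos.
  have := metric_ge0 d_metric (lam u) p; have := metric_ge0 d_metric (lam v) q.
  have := metric_ge0 d_metric (lam t) r; real_cases.
have := Rle_abs H0; lra.
Qed.

Lemma approx_pairwise_neq (P : Type) (lam : P -> X) E w x y z w' x' y' z' :
  d (lam w') w <= E -> d (lam x') x <= E -> d (lam y') y <= E -> d (lam z') z <= E ->
  pairwise4 (fun u v => 2 * E < d u v) w x y z -> pairwise4 (fun u v => u <> v) w' x' y' z'.
Proof.
have neq u v p q : d (lam u) p <= E -> d (lam v) q <= E -> 2 * E < d p q -> u <> v.
  move=> hu hv hpq euv; subst v.
  by have := metric_triangle d_metric p (lam u) q; rewrite (metric_sym d_metric p (lam u)); lra.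
move=> hw hx hy hz [fwx fwy fwz [fxy fxz fyz]].
by split; [apply: neq hw hx _ | apply: neq hw hy _ | apply: neq hw hz _
          | split; [apply: neq hx hy _ | apply: neq hx hz _ | apply: neq hy hz _]].
Qed.

Section ApproxSquare.
Variables (P : Type) (m : P -> P -> P -> P) (lam : P -> X) (h : R).
Hypotheses (h_ge0 : 0 <= h) (mu_median : median_axioms mu)
  (lam_hom : forall u v t, d (lam (m u v t)) (mu (lam u) (lam v) (lam t)) <= h).

Definition square_error : R :=
  let e1 := h + Rabs K * (h + h + h) + Rabs H0 in h + Rabs K * (h + e1 + e1) + Rabs H0.

Lemma square_error_ge : h <= h + Rabs K * (h + h + h) + Rabs H0 <= square_error.
Proof.
set e1 := h + _ + _.
have kh : 0 <= Rabs K * (h + h + h) by apply: Rmult_le_pos; [exact: Rabs_pos | lra].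
have h_le : h <= e1 by have := Rabs_pos H0; rewrite /e1; lra.
have ke : Rabs K * (h + h + h) <= Rabs K * (h + e1 + e1).
  by apply: Rmult_le_compat_l; [exact: Rabs_pos | lra].
by rewrite /square_error /= -/e1 {2}/e1; lra.
Qed.

Lemma approx_square w x y z a b c e :
  is_square mu w x y z ->
  d (lam a) w <= h -> d (lam b) x <= h -> d (lam e) y <= h -> d (lam c) z <= h ->
  let x' := m a b c in let y' := m a e c in
  [/\ d (lam (m a x' y')) w <= square_error, d (lam x') x <= square_error,
      d (lam y') y <= square_error & d (lam (m c x' y')) z <= square_error].
Proof.
move=> [sw sx sy sz] la lb le lc x' y'.
have swap u v t : mu u v t = mu v u t by case: mu_median => _ /(_ u v t) [].
have [_] := square_error_ge; set e1 := h + _ + _ => e1_le.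
have lx : d (lam x') x <= e1 by rewrite -sx swap; apply: approx_median (lam_hom a b c) la lb lc.
have ly : d (lam y') y <= e1 by rewrite -sy swap; apply: approx_median (lam_hom a e c) la le lc.
split; [| lra | lra |].
- by rewrite -sw /square_error /= -/e1; apply: (approx_median (m := m) (lam_hom a x' y')).
- by rewrite -sz /square_error /= -/e1; apply: (approx_median (m := m) (lam_hom c x' y')).
Qed.

End ApproxSquare.

(* An approximating median algebra of the corners of a large square of [mu]
   contains a square, hence a copy of the 2-cube. *)
Lemma rank_ge2_of_large_squares (H : nat -> R) n :
  median_axioms mu -> cm_C2 d mu H (fun _ m => median_rank_le m n) ->
  (forall D, exists w x y z, is_square mu w x y z /\ pairwise4 (fun u v => D < d u v) w x y z) ->
  (2 <= n)%N.
Proof.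
move=> mu_median [H_ge0 mu_C2] large.
have h_ge0 := H_ge0 4%N; have [h_le e1_le] := square_error_ge h_ge0.
have [w [x [y [z [sq far]]]]] := large (2 * square_error (H 4%N)).
have neq : pairwise4 (fun u v => u <> v) w x y z.
  by apply: pairwise4_impl far => u v uv; apply: (metric_gt0_neq d_metric); lra.
have [Pi [m [pi [lam [m_median [m_rank [lam_hom lam_pi]]]]]]] :=
  mu_C2 4%N _ (pairwise4_NoDup neq) isT isT.
have [la lb le lc] : [/\ d (lam (pi w)) w <= H 4%N, d (lam (pi x)) x <= H 4%N,
                         d (lam (pi y)) y <= H 4%N & d (lam (pi z)) z <= H 4%N].
  by split; apply: lam_pi => /=; tauto.
have [lw lx ly lz] := approx_square h_ge0 mu_median lam_hom sq la lb le lc.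
apply: (median_rank_ge2_of_square m_median m_rank (median_square m_median _ _ _ _)).
exact: approx_pairwise_neq lw lx ly lz far.
Qed.

End RankLowerBound.

Definition med (x y z : R) : R := Rmax (Rmin x y) (Rmin (Rmax x y) z).

Lemma med_idl x y : med x x y = x. Proof. rewrite /med; real_cases. Qed.
Lemma medC12 x y z : med x y z = med y x z. Proof. rewrite /med; real_cases. Qed.
Lemma medC23 x y z : med x y z = med x z y. Proof. rewrite /med; real_cases. Qed.
Lemma medA x y z u : med (med x y z) y u = med x y (med z y u).
Proof. rewrite /med; real_cases. Qed.
Lemma med_rot x y z : med x y z = med z x y. Proof. rewrite /med; real_cases. Qed.
Lemma med_is_arg x y z : med x y z = x \/ med x y z = y \/ med x y z = z.
Proof. rewrite /med; real_cases. Qed.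

Lemma med_lipschitz1 x x' y z : Rabs (med x y z - med x' y z) <= Rabs (x - x').
Proof. rewrite /med; real_cases. Qed.

Lemma med_lipschitz x y z x' y' z' :
  Rabs (med x y z - med x' y' z') <= Rabs (x - x') + Rabs (y - y') + Rabs (z - z').
Proof.
have hx := med_lipschitz1 x x' y z.
have hy := med_lipschitz1 y y' x' z; rewrite (medC12 y) (medC12 y') in hy.
have hz := med_lipschitz1 z z' x' y'; rewrite -(med_rot x' y' z) -(med_rot x' y' z') in hz.
have := Rabs_triang (med x y z - med x' y z) (med x' y z - med x' y' z).
have := Rabs_triang (med x y z - med x' y z + (med x' y z - med x' y' z))
                    (med x' y' z - med x' y' z').
have -> : med x y z - med x' y z + (med x' y z - med x' y' z) + (med x' y' z - med x' y' z')
        = med x y z - med x' y' z' by ring.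
lra.
Qed.

Lemma med_square_degenerate w x y z : is_square med w x y z -> x = w \/ y = w.
Proof. by case; rewrite /med; real_cases. Qed.

Definition l1 (p q : R * R) : R := Rabs (p.1 - q.1) + Rabs (p.2 - q.2).
Definition med2 (p q r : R * R) : R * R := (med p.1 q.1 r.1, med p.2 q.2 r.2).

Lemma l1_metric : is_metric l1.
Proof.
rewrite /l1; split; [|split; [|split]].
- by move=> p q; real_cases.
- move=> [p1 p2] [q1 q2] /=; split.
  + move=> h; have -> : p1 = q1 by real_cases.
    by have -> : p2 = q2 by real_cases.
  + by case=> -> ->; real_cases.
- by move=> p q; rewrite (Rabs_minus_sym p.1) (Rabs_minus_sym p.2).
- by move=> p q r; real_cases.
Qed.

Lemma med2_median_algebra : is_median_algebra med2.
Proof.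
split; [|split].
- by move=> [p1 p2] q; rewrite /med2 !med_idl.
- move=> p q r; split; rewrite /med2.
  + by rewrite medC12 (medC12 p.2).
  + by rewrite medC23 (medC23 p.2).
- by move=> p q r s; rewrite /med2 /= medA (medA p.2).
Qed.

Lemma med2_C1 : cm_C1 l1 med2 1 0.
Proof.
move=> p q r p' q' r'; rewrite /l1 /med2 /=.
have := med_lipschitz p.1 q.1 r.1 p'.1 q'.1 r'.1.
have := med_lipschitz p.2 q.2 r.2 p'.2 q'.2 r'.2.
lra.
Qed.

Lemma med2_rank_le2 : median_rank_le med2 2.
Proof.
(* Each coordinate of [f] collapses one of any two directions of the cube, so
   among three directions one collapses in both coordinates. *)
move=> k f f_inj f_hom; rewrite leqNgt; apply/negP => k_gt2.
have unit_fixed (pr : R * R -> R) (i j : 'I_k) : median_hom med2 med pr -> i != j ->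
    pr (f (cube_unit i)) = pr (f (cube0 k)) \/ pr (f (cube_unit j)) = pr (f (cube0 k)).
  move=> pr_hom ij; apply: med_square_degenerate.
  by do 2 apply: is_square_hom => //; apply: cube_square.
have fst_hom : median_hom med2 med fst by [].
have snd_hom : median_hom med2 med snd by [].
pose fixed i := (f (cube_unit i)).1 = (f (cube0 k)).1 /\ (f (cube_unit i)).2 = (f (cube0 k)).2.
have [i [e1 e2]] : exists i, fixed i.
  have k_gt0 : (0 < k)%N by apply: leq_ltn_trans k_gt2.
  have k_gt1 : (1 < k)%N by apply: leq_ltn_trans k_gt2.
  pose i0 := Ordinal k_gt0; pose i1 := Ordinal k_gt1; pose i2 := Ordinal k_gt2.
  have : fixed i0 \/ fixed i1 \/ fixed i2.
    have := unit_fixed _ i0 i1 fst_hom isT; have := unit_fixed _ i0 i2 fst_hom isT.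
    have := unit_fixed _ i1 i2 fst_hom isT; have := unit_fixed _ i0 i1 snd_hom isT.
    have := unit_fixed _ i0 i2 snd_hom isT; have := unit_fixed _ i1 i2 snd_hom isT.
    rewrite /fixed; tauto.
  by case=> [|[|]]; [exists i0 | exists i1 | exists i2].
have : f (cube_unit i) = f (cube0 k).
  by rewrite [LHS]surjective_pairing e1 e2 -surjective_pairing.
by move/f_inj/ffunP/(_ i); rewrite !ffunE eqxx.
Qed.

Lemma In_mem (T : eqType) (x : T) (s : seq T) : List.In x s -> x \in s.
Proof. by elim: s => //= y s IH [->|/IH]; rewrite inE ?eqxx // => ->; rewrite orbT. Qed.

Lemma med_mem (s : seq R) x y z : x \in s -> y \in s -> z \in s -> med x y z \in s.
Proof. by move=> hx hy hz; case: (med_is_arg x y z) => [->|[->|->]]. Qed.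

Section Grid.
Variable A : seq (R * R).

Definition grid : seq (R * R) := [seq (x, y) | x <- map fst A, y <- map snd A].

Lemma grid_med2 p q r : p \in grid -> q \in grid -> r \in grid -> med2 p q r \in grid.
Proof.
move=> /allpairsP [[p1 p2] [/= hp1 hp2 ->]] /allpairsP [[q1 q2] [/= hq1 hq2 ->]].
move=> /allpairsP [[r1 r2] [/= hr1 hr2 ->]].
by apply: allpairs_f; apply: med_mem.
Qed.

Lemma grid_mem p : p \in A -> p \in grid.
Proof. by case: p => p1 p2 h; apply: allpairs_f; apply/mapP; exists (p1, p2). Qed.

Definition grid_alg : finType := seq_sub grid.

Definition grid_med (x y z : grid_alg) : grid_alg := insubd x (med2 (val x) (val y) (val z)).

Lemma val_grid_med : median_hom grid_med med2 val.
Proof. by move=> x y z; rewrite /grid_med insubdK //; apply: grid_med2; apply: valP. Qed.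

Lemma grid_median_algebra : is_median_algebra grid_med.
Proof. exact: (median_algebra_inj val_grid_med val_inj med2_median_algebra). Qed.

Lemma grid_rank_le2 : median_rank_le grid_med 2.
Proof. exact: (median_rank_le_inj val_grid_med val_inj med2_rank_le2). Qed.

End Grid.

(* A finite set lies in its coordinate grid, a finite median subalgebra, so
   (C2) holds with no error at all. *)
Lemma med2_C2 : cm_C2 l1 med2 (fun _ => 0) (fun _ m => median_rank_le m 2).
Proof.
split=> [_|p [|a A] _ // _ _]; first lra.
have a_grid : a \in grid (a :: A) by apply: grid_mem; rewrite inE eqxx.
exists (grid_alg (a :: A)), (@grid_med (a :: A)), (insubd (Sub a a_grid)), val.
split; first exact: grid_median_algebra.
split; first exact: grid_rank_le2.
split=> [x y z | b /In_mem b_in].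
- by rewrite val_grid_med metric_xx //; [lra | exact: l1_metric].
- by rewrite insubdK ?metric_xx; [lra | exact: l1_metric | exact: grid_mem].
Qed.

Lemma l1_large_squares D : exists w x y z,
  is_square med2 w x y z /\ pairwise4 (fun u v => D < l1 u v) w x y z.
Proof.
set n := Rabs D + 1; have n_gt : Rabs D < n by rewrite /n; lra.
exists (0, 0), (n, 0), (0, n), (n, n); split.
- by split; rewrite /med2 /med /=; congr pair; move: n_gt; real_cases.
- by split; [| | | split]; rewrite /l1 /=; move: n_gt; real_cases.
Qed.

Lemma med2_rank_ge2 n : coarse_median_rank_le l1 med2 n -> (2 <= n)%N.
Proof.
move=> [[_ [med2_median _]] [K [H0 [H [C1 C2]]]]].
exact: (rank_ge2_of_large_squares l1_metric C1 med2_median C2 l1_large_squares).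
Qed.

Definition clamp (L s : R) : R := Rmax 0 (Rmin L s).

Definition walk (x y s : R) : R :=
  x + (if Rle_dec x y then 1 else -1) * clamp (Rabs (x - y)) s.

Lemma walk_dist x y s t :
  Rabs (walk x y s - walk x y t) = Rabs (clamp (Rabs (x - y)) s - clamp (Rabs (x - y)) t).
Proof.
rewrite /walk; set c := if _ then _ else _; set L := Rabs (x - y).
have c_abs : Rabs c = 1 by rewrite /c; case: (Rle_dec x y) => _ /=; real_cases.
have -> : x + c * clamp L s - (x + c * clamp L t) = c * (clamp L s - clamp L t) by ring.
by rewrite Rabs_mult c_abs Rmult_1_l.
Qed.

Lemma walk_start x y s : s <= 0 -> walk x y s = x.
Proof. by rewrite /walk /clamp; real_cases. Qed.

Lemma walk_end x y s : Rabs (x - y) <= s -> walk x y s = y.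
Proof. by rewrite /walk /clamp; real_cases. Qed.

Lemma clamp_concat L1 L2 s t :
  0 <= L1 -> 0 <= L2 -> 0 <= s <= L1 + L2 -> 0 <= t <= L1 + L2 ->
  Rabs (clamp L1 s - clamp L1 t) + Rabs (clamp L2 (s - L1) - clamp L2 (t - L1)) = Rabs (s - t).
Proof. by rewrite /clamp; real_cases. Qed.

Definition l1_path (p q : R * R) (t : R) : R * R :=
  (walk p.1 q.1 t, walk p.2 q.2 (t - Rabs (p.1 - q.1))).

Lemma l1_path_geodesic p q : geodesic_between l1 p q (l1 p q) (l1_path p q).
Proof.
have [L1_ge0 L2_ge0] := (Rabs_pos (p.1 - q.1), Rabs_pos (p.2 - q.2)).
rewrite /l1_path /l1; split; [lra | split; [|split]].
- by rewrite !walk_start; [rewrite -surjective_pairing | lra | lra].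
- by rewrite !walk_end; [rewrite -surjective_pairing | lra | lra].
- by move=> s t hs ht; rewrite /= !walk_dist clamp_concat.
Qed.

Lemma l1_geodesic_space : geodesic_space l1.
Proof. by move=> p q; exists (l1 p q), (l1_path p q); apply: l1_path_geodesic. Qed.

Lemma l1_interval_far_from_geodesics C : 0 <= C -> exists a b : R * R,
  forall L g, geodesic_between l1 a b L g ->
    ~ hausdorff_le l1 (geodesic_image L g) (cm_interval med2 a b) C.
Proof.
move=> C_ge0; have [N N_def] : {N | N = 2 * C + 2} by exists (2 * C + 2).
have N_gt0 : 0 < N by lra.
exists (0, 0), (N, N) => L g g_geo [_ near_geo].
have [p_in q_in] : cm_interval med2 (0, 0) (N, N) (N, 0) /\ cm_interval med2 (0, 0) (N, N) (0, N).
  by split; [exists (N, 0) | exists (0, N)]; rewrite /med2 /med /=; congr pair; move: N_gt0; real_cases.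
have near p : cm_interval med2 (0, 0) (N, N) p -> exists t, 0 <= t <= L /\ l1 p (g t) <= C + 1/2.
  move=> /near_geo /(_ (1/2)) [|_ [[t [t_in ->]] near]]; first lra.
  by exists t.
have [[t1 [t1_in near1]] [t2 [t2_in near2]]] := (near _ p_in, near _ q_in).
have [p_between q_between] :
    l1 (0, 0) (N, 0) + l1 (N, 0) (N, N) = l1 (0, 0) (N, N) /\
    l1 (0, 0) (0, N) + l1 (0, N) (N, N) = l1 (0, 0) (N, N).
  by rewrite /l1 /=; split; real_cases.
have := geodesic_near_two_points l1_metric g_geo p_between q_between t1_in t2_in near1 near2.
by rewrite /l1 /=; real_cases.
Qed.

Theorem theorem5p1 :
  exists (X : Type) (d : X -> X -> R) (mu : X -> X -> X -> X),
    geodesic_space d /\ coarse_median_space d mu /\ coarse_median_rank d mu 2 /\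
    forall C : R, 0 <= C ->
      exists a b : X,
        forall (L : R) (g : R -> X), geodesic_between d a b L g ->
          ~ hausdorff_le d (geodesic_image L g) (cm_interval mu a b) C.
Proof.
have med2_space : coarse_median_space l1 med2.
  split; [exact: l1_metric | split; [exact: median_algebra_axioms med2_median_algebra |]].
  by exists 1, 0, (fun _ => 0); split; [exact: med2_C1 | exact: cm_C2_weaken (fun _ _ _ => I) med2_C2].
exists (R * R)%type, l1, med2; split; [exact: l1_geodesic_space | split => //].
split; last exact: l1_interval_far_from_geodesics.
split; last exact: med2_rank_ge2.
by split=> //; exists 1, 0, (fun _ => 0); split; [exact: med2_C1 | exact: med2_C2].
Qed.
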